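(* Let $H$ be a digraph (possibly with loops), let $D$ be an $H$-colored quasi-transitive digraph, let $k \geq 4$, and let $u,v$ be distinct vertices of $D$. If there exists a directed $uv$-walk in $D$, then either $u$ and $v$ are adjacent in $D$, or $(v,u)$ is a symmetric arc of $C_{H}^{k-1}(D)$ (that is, both $(u,v)$ and $(v,u)$ are arcs of $C_{H}^{k-1}(D)$).
   Context: All digraphs are finite. A digraph $D$ is quasi-transitive if for all distinct $u,v\in V(D)$, whenever there is a directed $uv$-path of length $2$, $u$ and $v$ are joined by an arc (in some direction). Two vertices are adjacent if there is an arc between them. $D$ has no loops and comes with a map $\rho: A(D)\to V(H)$. For a walk $W=(x_0,\ldots,x_n)$ in $D$, there is an obstruction on $x_i$ if $(\rho(x_{i-1},x_i),\rho(x_i,x_{i+1})) \notin A(H)$; for an open walk this is considered at internal vertices $x_i$, $1\le i\le n-1$, for a closed walk at all $i\in\{0,\ldots,n-1\}$ with indices modulo $n$. $O_H(W)$ is the set of indices with an obstruction; the $H$-length is $l_H(W)=|O_H(W)|+1$ for open $W$ and $|O_H(W)|$ for closed $W$. The $(k-1,H)$-closure $C_H^{k-1}(D)$ is the digraph on $V(D)$ in which $(x,y)$ is an arc iff there is a directed $xy$-path in $D$ of $H$-length at most $k-1$. *)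

From mathcomp Require Import all_boot.
Set Implicit Arguments. Unset Strict Implicit. Unset Printing Implicit Defensive.

(* H : vertex type VH, arc relation AH (loops allowed).
   rho : V -> V -> VH is the colouring; only its values rho x y on arcs (x,y)
   of D are ever used. *)

Section Defs.
Variables (V VH : finType) (A : rel V) (AH : rel VH) (rho : V -> V -> VH).

Definition loopless : Prop := forall x, ~~ A x x.

Definition quasi_transitive : Prop :=
  forall u w v, u != v -> A u w -> A w v -> A u v || A v u.

Definition adjacent (u v : V) : bool := A u v || A v u.

Definition walk (x0 : V) (s : seq V) : bool := path A x0 s.
Definition dpath (x0 : V) (s : seq V) : bool := path A x0 s && uniq (x0 :: s).

Fixpoint obstructions (l : seq V) : nat :=
  match l with
  | a :: ((b :: c :: _) as t) => (~~ AH (rho a b) (rho b c)) + obstructions t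
  | _ => 0
  end.

Definition H_length (l : seq V) : nat := obstructions l + 1.

Definition closure_arc (k : nat) (x y : V) : Prop :=
  x != y /\ exists s : seq V,
    [/\ dpath x s, last x s = y & H_length (x :: s) <= k - 1].

End Defs.

From mathcomp Require Import all_boot.
From mathcomp Require Import zify.
Set Implicit Arguments. Unset Strict Implicit. Unset Printing Implicit Defensive.

(* Take a shortest uv-walk, of length n.  Quasi-transitivity turns every
   subwalk x -> y -> z of it into a backward arc z -> x, since x and z are
   adjacent but x -> z would shorten the walk.  Chaining such backward arcs
   yields v -> u whenever n = 2 or n >= 4 (n = 5 needs a detour through
   distance 4).  So if u and v are not adjacent then n = 3: the walk
   u -> x1 -> x2 -> v comes with the backward arcs v -> x1 and x2 -> u, and
   the paths u x1 x2 v and v x1 x2 u have only two internal vertices, hence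
   H-length at most 3 <= k - 1. *)

Section Distance.
Variables (V : finType) (A : rel V).

Fixpoint nreach (n : nat) (a b : V) : bool :=
  if n is n'.+1 then [exists c, A a c && nreach n' c b] else a == b.

Lemma nreach1 a b : nreach 1 a b = A a b.
Proof.
by apply/existsP/idP => [[c /andP[h /eqP<-]]|h] //; exists b; rewrite h eqxx.
Qed.

Lemma nreachD m n a b :
  nreach (m + n) a b = [exists c, nreach m a c && nreach n c b].
Proof.
elim: m a => [|m IH] a /=.
  apply/idP/existsP => [h|[c /andP[/eqP<- h]]] //; by exists a; rewrite eqxx.
apply/existsP/existsP => [[c /andP[ac]]|[c /andP[/existsP[d /andP[ad dc]] cb]]].
  rewrite IH => /existsP[d /andP[cd db]]; exists d; rewrite db andbT.
  by apply/existsP; exists c; rewrite ac.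
by exists d; rewrite ad IH; apply/existsP; exists c; rewrite dc.
Qed.

Lemma path_nreach a s : path A a s -> nreach (size s) a (last a s).
Proof.
elim: s a => [|x s IH] a /=; first by rewrite eqxx.
by move=> /andP[ax p]; apply/existsP; exists x; rewrite ax IH.
Qed.

Definition is_dist (n : nat) (a b : V) : Prop :=
  nreach n a b /\ forall m, m < n -> ~~ nreach m a b.

Lemma exists_is_dist n a b : nreach n a b -> exists m, is_dist m a b.
Proof.
move=> h; have ex_n : exists n, nreach n a b by exists n.
case: (ex_minnP ex_n) => m hm min_m.
by exists m; split => // j lt_jm; apply/negP => /min_m; rewrite leqNgt lt_jm.
Qed.

Lemma is_dist_split m n a b c :
  is_dist (m + n) a b -> nreach m a c -> nreach n c b ->
  is_dist m a c /\ is_dist n c b.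
Proof.
move=> [_ min_mn] ac cb; split; split => // j lt_j; apply/negP => h.
  have := min_mn (j + n); rewrite ltn_add2r lt_j => /(_ isT) /negP; apply.
  by rewrite nreachD; apply/existsP; exists c; rewrite h.
have := min_mn (m + j); rewrite ltn_add2l lt_j => /(_ isT) /negP; apply.
by rewrite nreachD; apply/existsP; exists c; rewrite ac.
Qed.

Lemma is_dist_mid m n a b :
  is_dist (m + n) a b -> exists c, is_dist m a c /\ is_dist n c b.
Proof.
move=> hd; have := hd.1; rewrite nreachD => /existsP[c /andP[ac cb]].
by exists c; apply: is_dist_split.
Qed.

Lemma is_dist_neq n a b : is_dist n a b -> 0 < n -> a != b.
Proof. by move=> [_ min_n] /min_n. Qed.

Lemma is_dist_nArc n a b : is_dist n a b -> 1 < n -> ~~ A a b.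
Proof. by move=> [_ min_n] /min_n; rewrite nreach1. Qed.

Hypothesis qtA : quasi_transitive A.

Lemma is_dist_rev_arc n a b c :
  is_dist n a b -> 1 < n -> A b c -> A c a -> A b a.
Proof.
move=> hd n_gt1 bc ca.
have ba : b != a by rewrite eq_sym (is_dist_neq hd (ltnW n_gt1)).
by have := qtA ba bc ca; rewrite (negbTE (is_dist_nArc hd n_gt1)) orbF.
Qed.

Lemma is_dist2_rev a b : is_dist 2 a b -> A b a.
Proof.
move=> hd; have [c [[ac _] [cb _]]] := is_dist_mid (hd : is_dist (1 + 1) a b).
rewrite !nreach1 in ac cb.
by have := qtA (is_dist_neq hd isT) ac cb; rewrite (negbTE (is_dist_nArc hd isT)).
Qed.

Lemma is_dist_rev n a b : is_dist n a b -> 2 <= n -> n != 3 -> A b a.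
Proof.
elim/ltn_ind: n a b => n IH a b hd n_ge2 n_neq3.
have [n2|n_gt3] : n = 2 \/ 3 < n by lia.
  by rewrite n2 in hd; exact: is_dist2_rev hd.
have [n5|n_neq5] := eqVneq n 5.
  rewrite {}n5 in hd IH *.
  have [e [ae eb]] := is_dist_mid (hd : is_dist (3 + 2) a b).
  have [d [[ed _] [db _]]] := is_dist_mid (eb : is_dist (1 + 1) e b).
  have ad : nreach 4 a d.
    by rewrite (nreachD 3 1); apply/existsP; exists e; rewrite ae.1 ed.
  have [ad4 _] := is_dist_split (hd : is_dist (4 + 1) a b) ad db.
  have da : A d a := IH 4 isT a d ad4 isT isT.
  have ea : A e a by apply: (is_dist_rev_arc ae isT _ da); rewrite -nreach1.
  exact: is_dist_rev_arc hd isT (is_dist2_rev eb) ea.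
have [c [ac cb]] : exists c, is_dist 2 a c /\ is_dist (n - 2) c b.
  by apply: is_dist_mid; rewrite subnKC.
have bc : A b c by apply: (IH (n - 2) _ c b cb); lia.
exact: is_dist_rev_arc hd n_ge2 bc (is_dist2_rev ac).
Qed.

Lemma is_dist3_paths a b : is_dist 3 a b ->
  exists x1 x2, [/\ path A a [:: x1; x2; b], path A b [:: x1; x2; a]
                  & uniq [:: a; x1; x2; b]].
Proof.
move=> hd; have [x1 [ax1 x1b]] := is_dist_mid (hd : is_dist (1 + 2) a b).
have [x2 [x12 x2b]] := is_dist_mid (x1b : is_dist (1 + 1) x1 b).
have ax2 : nreach 2 a x2.
  by rewrite (nreachD 1 1); apply/existsP; exists x1; rewrite ax1.1 x12.1.
have [ax2_d _] := is_dist_split (hd : is_dist (2 + 1) a b) ax2 x2b.1.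
exists x1, x2; split.
- by rewrite /= -!nreach1 ax1.1 x12.1 x2b.1.
- by rewrite /= (is_dist2_rev x1b) (is_dist2_rev ax2_d) -nreach1 x12.1.
- rewrite /= !inE !negb_or.
  by rewrite !(is_dist_neq hd, is_dist_neq ax1, is_dist_neq ax2_d,
               is_dist_neq x12, is_dist_neq x1b, is_dist_neq x2b).
Qed.

End Distance.

Section Closure.
Variables (V VH : finType) (A : rel V) (AH : rel VH) (rho : V -> V -> VH).

Lemma obstructions_le (l : seq V) : obstructions AH rho l <= (size l).-2.
Proof.
by elim: l => [|a [|b [|c t]] IH] //=; rewrite -add1n leq_add ?leq_b1.
Qed.

Lemma path_closure_arc k x s :
  path A x s -> uniq (x :: s) -> 0 < size s < k ->
  closure_arc A AH rho k x (last x s).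
Proof.
move=> p uq /andP[s_gt0 s_ltk]; split; last first.
  exists s; split=> //; first exact/andP.
  by have := obstructions_le (x :: s); rewrite /H_length /=; lia.
case: s s_gt0 uq {p s_ltk} => [|y s] //= _ /andP[xs _].
by apply: contraNneq xs => ->; exact: mem_last.
Qed.

End Closure.

Theorem lemma15 (V VH : finType) (A : rel V) (AH : rel VH)
    (rho : V -> V -> VH) (k : nat) (u v : V) :
  loopless A -> quasi_transitive A -> 4 <= k -> u != v ->
  (exists s : seq V, walk A u s /\ last u s = v) ->
  adjacent A u v \/
  (closure_arc A AH rho k u v /\ closure_arc A AH rho k v u).
Proof.
move=> _ qtA k_ge4 uv [s [ws ls]].
have [n hd] := exists_is_dist (path_nreach ws); rewrite ls in hd.
have [adj|/norP[nuv nvu]] := boolP (adjacent A u v); [by left | right].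
have n_ge2 : 1 < n.
  case: n hd => [|[|n]] [uv_n _] //; first by rewrite /= (negbTE uv) in uv_n.
  by rewrite nreach1 (negbTE nuv) in uv_n.
have n3 : n = 3.
  by apply/eqP; apply: contraNT nvu => /(is_dist_rev qtA hd n_ge2).
rewrite {}n3 in hd.
have [x1 [x2 [p_uv p_vu uq_uv]]] := is_dist3_paths qtA hd.
have uq_vu : uniq [:: v; x1; x2; u].
  have : perm_eq [:: v; x1; x2; u] [:: u; x1; x2; v] by apply/permP => p /=; lia.
  by move/perm_uniq ->.
by split; [exact: path_closure_arc p_uv uq_uv _ |
           exact: path_closure_arc p_vu uq_vu _].
Qed.
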